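(* The language $P^*_n=\{w \in \{1,\dots,n\}^* : |w|_a \geq 1 \text{ for all } a \in \{1,\dots,n\}\}$ requires regular expressions of length at least $\mathrm{rpn}(P^*_n) \geq \Omega\big(4^n n^{- (3+\log n)/4}\big)$.
   Context: $|w|_a$ is the number of occurrences of letter $a$ in $w$. Regular expressions are built from $\epsilon$ and letters by union, concatenation and star (no $\emptyset$); $\mathrm{rpn}(L)$ is the minimum number of syntax-tree nodes of an expression describing $L$. Logarithms are base 2. *)

From mathcomp Require Import all_boot.
From Stdlib Require Import Reals ClassicalEpsilon.
Set Implicit Arguments. Unset Strict Implicit. Unset Printing Implicit Defensive.

Inductive regex (T : Type) : Type :=
  | REps : regex T
  | RLet : T -> regex T
  | RUnion : regex T -> regex T -> regex T
  | RCat : regex T -> regex T -> regex T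
  | RStar : regex T -> regex T.
Arguments REps {T}.

Fixpoint rsize (T : Type) (e : regex T) : nat :=
  match e with
  | REps => 1
  | RLet _ => 1
  | RUnion e1 e2 => (rsize e1 + rsize e2).+1
  | RCat e1 e2 => (rsize e1 + rsize e2).+1
  | RStar e1 => (rsize e1).+1
  end.

Inductive rmatch (T : Type) : regex T -> seq T -> Prop :=
  | rm_eps : rmatch REps [::]
  | rm_let a : rmatch (RLet a) [:: a]
  | rm_unionl e1 e2 w : rmatch e1 w -> rmatch (RUnion e1 e2) w
  | rm_unionr e1 e2 w : rmatch e2 w -> rmatch (RUnion e1 e2) w
  | rm_cat e1 e2 u v : rmatch e1 u -> rmatch e2 v -> rmatch (RCat e1 e2) (u ++ v)
  | rm_star_nil e : rmatch (RStar e) [::]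
  | rm_star_cat e u v : rmatch e u -> rmatch (RStar e) v -> rmatch (RStar e) (u ++ v).

Definition describes (T : Type) (e : regex T) (L : seq T -> Prop) : Prop :=
  forall w, rmatch e w <-> L w.

Definition describable (T : Type) (L : seq T -> Prop) : Prop :=
  exists e : regex T, describes e L.

Definition has_rsize (T : Type) (L : seq T -> Prop) (k : nat) : bool :=
  if excluded_middle_informative (exists e : regex T, describes e L /\ rsize e = k)
  then true else false.

Lemma has_rsize_ex (T : Type) (L : seq T -> Prop) :
  describable L -> exists k, has_rsize L k.
Proof.
move=> [e He]; exists (rsize e); rewrite /has_rsize.
by case: excluded_middle_informative => // [[]]; exists e.
Qed.

(* rpn(L): minimal number of syntax-tree nodes of an expression describing L
   (set to 0 by convention when L is not describable; irrelevant here). *)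
Definition rpn (T : Type) (L : seq T -> Prop) : nat :=
  match excluded_middle_informative (describable L) with
  | left H => ex_minn (has_rsize_ex H)
  | right _ => 0
  end.

Definition Pstar (n : nat) (w : seq 'I_n) : Prop :=
  forall a : 'I_n, (1 <= count_mem a w)%N.

Definition log2 (x : R) : R := (ln x / ln 2)%R.

(* Let e describe P*_n and let S be a set of letters occurring in every word
   of L(e).  Count the permutations of S matched by e: a union adds the counts
   of its two sides, and for a concatenation e1 e2 one matched permutation
   u0 v0 fixes the letter set A of u0, after which every matched permutation
   of S is a permutation of A matched by e1 followed by a permutation of S \ A
   matched by e2.  Consequently, for any F with F(m) <= 1 or
   F(m) <= C(m,k) (F(k) + F(m-k)) for all 0 < k < m, induction on e gives
   F(|S|) * #matched <= |e| * |S|!; as e matches all n! permutations of the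
   alphabet, F(n) <= rpn(P*_n).
   The function F(m) = 4^(m-128) m^(-(3 + log m)/4) satisfies this for
   m >= 128 in the stronger form F(m) <= C(m,j) F(m-j), j = min(k, m-k).  For
   j <= (1 + log m)/2 this follows from C(m,j) >= 4^j; for larger j from
   C(2j,j) >= 4^j / (2 sqrt j) and C(m,j) >= C(2j,j) e^(j(m-2j)/m), the deficit
   being absorbed by the log^2 m term of the exponent. *)

From Stdlib Require Import Reals Psatz ClassicalEpsilon.
From mathcomp Require Import all_boot boolp zify.
Set Implicit Arguments. Unset Strict Implicit. Unset Printing Implicit Defensive.

(* all_boot rebinds the key %R to ring_scope; the statement of corollary8p6
   uses it for the reals. *)
Delimit Scope R_scope with R.

Section RegexMatching.
Variable T : Type.
Implicit Types (e : regex T) (w : seq T).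

Lemma rmatch_let_inv a w : rmatch (RLet a) w -> w = [:: a].
Proof. by move=> h; inversion h. Qed.

Lemma rmatch_union_inv e1 e2 w : rmatch (RUnion e1 e2) w -> rmatch e1 w \/ rmatch e2 w.
Proof. by move=> h; inversion h; [left | right]. Qed.

Lemma rmatch_cat_inv e1 e2 w :
  rmatch (RCat e1 e2) w -> exists u v, [/\ w = u ++ v, rmatch e1 u & rmatch e2 v].
Proof. by move=> h; inversion h; exists u, v. Qed.

Lemma rmatch_foldr_union (X : eqType) (f : X -> regex T) e0 (xs : seq X) w :
  rmatch (foldr (fun x e => RUnion (f x) e) e0 xs) w <->
  rmatch e0 w \/ exists2 x, x \in xs & rmatch (f x) w.
Proof.
elim: xs => [|y xs IH] /=; first by split=> [|[//|[]]]; [left|].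
split=> [/rmatch_union_inv[h|/IH[h|[x xs_x h]]] | [h|[x]]].
- by right; exists y; rewrite ?inE ?eqxx.
- by left.
- by right; exists x; rewrite // inE xs_x orbT.
- by apply: rm_unionr; apply/IH; left.
- rewrite inE => /orP[/eqP-> h|xs_x h]; first exact: rm_unionl.
  by apply: rm_unionr; apply/IH; right; exists x.
Qed.

End RegexMatching.

Section PermutationCounting.
Variable T : finType.
Implicit Types (e : regex T) (S A : {set T}) (u v w : seq T).

Definition covers e S := forall w, rmatch e w -> {subset S <= w}.

Definition nperm e S := count (fun w => `[< rmatch e w >]) (permutations (enum S)).

Lemma covers_card e S w : covers e S -> rmatch e w -> #|S| <= size w.
Proof.
move=> cov /cov sub; apply: leq_trans (card_size w).
by apply: subset_leq_card; apply/subsetP.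
Qed.

Lemma nperm_le_fact e S : nperm e S <= #|S|`!.
Proof. by rewrite cardE -size_permutations ?enum_uniq //; apply: count_size. Qed.

Lemma nperm_union e1 e2 S : nperm (RUnion e1 e2) S <= nperm e1 S + nperm e2 S.
Proof.
rewrite /nperm -count_predUI; apply: leq_trans (leq_addr _ _).
by apply: sub_count => w /asboolP/rmatch_union_inv[] /asboolP h /=; rewrite h ?orbT.
Qed.

Lemma perm_cat_split S A u v :
  perm_eq (u ++ v) (enum S) -> {subset A <= u} -> {subset S :\: A <= v} ->
  perm_eq u (enum A) /\ perm_eq v (enum (S :\: A)).
Proof.
move=> uvS Au SAv; have := perm_uniq uvS; rewrite enum_uniq cat_uniq.
case/and3P=> uniq_u /hasPn disj uniq_v.
have inS x : x \in u ++ v -> x \in S by rewrite (perm_mem uvS) mem_enum.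
split; apply: uniq_perm; rewrite ?enum_uniq // => x; rewrite mem_enum.
- apply/idP/idP=> [xu|/Au //]; apply/negPn/negP=> xA.
  have xv : x \in v by apply: SAv; rewrite inE xA inS // mem_cat xu.
  by move: (disj x xv); rewrite /= xu.
- apply/idP/idP=> [xv|/SAv //]; rewrite inE inS ?mem_cat ?xv ?orbT // andbT.
  by apply/negP=> /Au xu; move: (disj x xv); rewrite /= xu.
Qed.

Lemma nperm_cat e1 e2 S A : covers e1 A -> covers e2 (S :\: A) ->
  nperm (RCat e1 e2) S <= nperm e1 A * nperm e2 (S :\: A).
Proof.
move=> cov1 cov2; rewrite /nperm -!size_filter -(size_allpairs cat).
apply: uniq_leq_size; first by rewrite filter_uniq ?permutations_uniq.
move=> w; rewrite mem_filter mem_permutations => /andP[/asboolP hw wS].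
have [u [v [wE hu hv]]] := rmatch_cat_inv hw; rewrite {}wE in wS *.
have [uA vSA] := perm_cat_split wS (cov1 _ hu) (cov2 _ hv).
by apply: allpairs_f; rewrite mem_filter mem_permutations ?uA ?vSA andbT; apply/asboolP.
Qed.

Lemma covers_cat_split e1 e2 S : covers (RCat e1 e2) S -> 0 < nperm (RCat e1 e2) S ->
  exists A, [/\ A \subset S, covers e1 A & covers e2 (S :\: A)].
Proof.
move=> cov; rewrite -has_count => /hasP[w0].
rewrite mem_permutations => w0S /asboolP/rmatch_cat_inv[u0 [v0 [w0E hu0 hv0]]].
have := perm_uniq w0S; rewrite enum_uniq w0E cat_uniq => /and3P[_ /hasPn disj _].
have u0S x : x \in u0 -> x \in S.
  by move=> xu0; rewrite -mem_enum -(perm_mem w0S) w0E mem_cat xu0.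
exists [set x in u0]; split.
- by apply/subsetP=> x; rewrite inE; apply: u0S.
- move=> u hu x; rewrite inE => xu0.
  have := cov _ (rm_cat hu hv0) x (u0S _ xu0); rewrite mem_cat => /orP[//|xv0].
  by move: (disj x xv0); rewrite /= xu0.
- move=> v hv x; rewrite !inE => /andP[xNu0 xS].
  have := cov _ (rm_cat hu0 hv) x xS; rewrite mem_cat => /orP[xu0|//].
  by rewrite xu0 in xNu0.
Qed.

End PermutationCounting.

Section AllLetters.
Variable T : finType.
Implicit Types (s w : seq T).

Definition rsigma_star : regex T :=
  RStar (foldr (fun a e => RUnion (RLet a) e) REps (enum T)).

Lemma rmatch_sigma_star w : rmatch rsigma_star w.
Proof.
elim: w => [|a w IH]; first exact: rm_star_nil.
apply: (@rm_star_cat _ _ [:: a]) => //; apply/rmatch_foldr_union; right.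
by exists a; [rewrite mem_enum | apply: rm_let].
Qed.

Definition rsubword s : regex T :=
  foldr (fun a e => RCat rsigma_star (RCat (RLet a) e)) rsigma_star s.

Lemma rmatch_rsubword_mem s w : rmatch (rsubword s) w -> {subset s <= w}.
Proof.
elim: s w => // a s IH w /rmatch_cat_inv[u [v [-> _ /rmatch_cat_inv[a' [v' [-> ha hv']]]]]].
move=> x; rewrite (rmatch_let_inv ha) inE => /orP[/eqP->|/(IH _ hv') xv'].
  by rewrite !mem_cat inE eqxx orbT.
by rewrite !mem_cat xv' !orbT.
Qed.

Lemma subseq_rmatch_rsubword s w : subseq s w -> rmatch (rsubword s) w.
Proof.
elim: w s => [|x w IH] [|a s] //=; try by move=> _; apply: rmatch_sigma_star.
case: eqVneq => [<-|_] sub.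
  apply: (@rm_cat _ _ _ [::]); first exact: rm_star_nil.
  exact: (@rm_cat _ _ _ [:: _] w (rm_let _) (IH _ sub)).
have /rmatch_cat_inv[u [v [-> _ hv]]] := IH _ sub.
exact: (@rm_cat _ _ _ (x :: u) v (rmatch_sigma_star _) hv).
Qed.

Definition rall_letters : regex T :=
  foldr (fun s e => RUnion (rsubword s) e) (rsubword (enum T)) (permutations (enum T)).

Lemma rmatch_all_letters w : rmatch rall_letters w <-> forall a : T, a \in w.
Proof.
split=> [/rmatch_foldr_union[/rmatch_rsubword_mem sub|[s s_perm /rmatch_rsubword_mem sub]] a
        | w_all].
- by apply: sub; rewrite mem_enum.
- by apply: sub; move: s_perm; rewrite mem_permutations => /perm_mem->; rewrite mem_enum.
- apply/rmatch_foldr_union; right; exists (undup w); last first.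
    exact/subseq_rmatch_rsubword/undup_subseq.
  rewrite mem_permutations; apply: uniq_perm; rewrite ?undup_uniq ?enum_uniq // => a.
  by rewrite mem_undup mem_enum w_all.
Qed.

End AllLetters.

Lemma PstarE n (w : seq 'I_n) : Pstar w <-> forall a, a \in w.
Proof. by split=> w_all a; have := w_all a; rewrite -has_pred1 has_count. Qed.

Lemma Pstar_describable n : describable (@Pstar n).
Proof. by exists (rall_letters 'I_n) => w; rewrite rmatch_all_letters PstarE. Qed.

Lemma rpn_spec (T : Type) (L : seq T -> Prop) :
  describable L -> exists2 e, describes e L & rsize e = rpn L.
Proof.
move=> LD; rewrite /rpn; case: excluded_middle_informative => [{}LD|//].
case: ex_minnP => k; rewrite /has_rsize.
by case: excluded_middle_informative => // [[e [eL ek]]] _ _; exists e.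
Qed.

Section NpermBound.
Local Open Scope R_scope.

Lemma leq_INR (m n : nat) : (m <= n)%N -> INR m <= INR n.
Proof. by move/leP; apply: le_INR. Qed.

Lemma cat_bound_arith (Fm Fk Fl C n n1 n2 fk fl r1 r2 : R) :
  0 <= Fm -> 0 <= Fk -> 0 <= Fl -> 0 <= C -> 0 <= n -> 0 <= n1 -> 0 <= n2 ->
  n <= n1 * n2 -> n1 <= fk -> n2 <= fl -> Fk * n1 <= r1 * fk -> Fl * n2 <= r2 * fl ->
  Fm <= C * (Fk + Fl) -> Fm * n <= (r1 + r2 + 1) * (C * (fk * fl)).
Proof.
move=> Fm0 Fk0 Fl0 C0 n0 n10 n20 nn12 n1fk n2fl IHk IHl HFm.
have h1 : Fk * n1 * n2 <= r1 * fk * fl.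
  apply: Rle_trans (Rmult_le_compat_r _ _ _ n20 IHk) _.
  by apply: Rmult_le_compat_l => //; nra.
have h2 : Fl * n2 * n1 <= r2 * fl * fk.
  apply: Rle_trans (Rmult_le_compat_r _ _ _ n10 IHl) _.
  by apply: Rmult_le_compat_l => //; nra.
have h3 : Fm * n <= C * (Fk + Fl) * (n1 * n2).
  by apply: Rmult_le_compat => //; nra.
have h4 : C * (Fk * n1 * n2 + Fl * n2 * n1) <= C * (r1 * fk * fl + r2 * fl * fk).
  by apply: Rmult_le_compat_l => //; lra.
have h5 : 0 <= C * (fk * fl) by apply: Rmult_le_pos => //; nra.
nra.
Qed.

Definition binomial_splitting (F : nat -> R) :=
  forall m, F m <= 1 \/
    (1 < m)%N /\ forall k, (0 < k < m)%N -> F m <= INR 'C(m, k) * (F k + F (m - k)%N).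

Variable F : nat -> R.
Hypothesis F_ge0 : forall m, 0 <= F m.
Hypothesis F_split : binomial_splitting F.

Lemma binomial_split_le m k :
  (forall k, (0 < k < m)%N -> F m <= INR 'C(m, k) * (F k + F (m - k)%N)) ->
  (k <= m)%N -> F m <= INR 'C(m, k) * (F k + F (m - k)%N).
Proof.
move=> m_split km; have F0 := F_ge0 0.
have [->|k_gt0] := posnP k; first by rewrite bin0 subn0 /=; lra.
have [k_lt_m|m_lt_k|->] := ltngtP k m; first by apply: m_split; rewrite k_gt0.
  by rewrite ltnNge km in m_lt_k.
by rewrite binn subnn /=; lra.
Qed.

Lemma nperm_bound_small (T : finType) (e : regex T) (S : {set T}) : F #|S| <= 1 ->
  F #|S| * INR (nperm e S) <= INR (rsize e) * INR #|S|`!.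
Proof.
have := leq_INR (nperm_le_fact e S); have := F_ge0 #|S|; have := pos_INR (nperm e S).
have : 1 <= INR (rsize e) by apply: (leq_INR (m := 1)); case: e.
nra.
Qed.

Lemma nperm_bound (T : finType) (e : regex T) (S : {set T}) : covers e S ->
  F #|S| * INR (nperm e S) <= INR (rsize e) * INR #|S|`!.
Proof.
elim: e S => [|a|e1 IH1 e2 IH2|e1 IH1 e2 IH2|e1 _] S cov;
  (have [F_le1|[S_gt1 S_split]] := F_split #|S|; first exact: nperm_bound_small).
- by have := covers_card cov (rm_eps _); rewrite leqNgt ltnW.
- by have := covers_card cov (rm_let a); rewrite leqNgt S_gt1.
- have := IH1 S (fun w h => cov w (rm_unionl _ h)).
  have := IH2 S (fun w h => cov w (rm_unionr _ h)).
  have := leq_INR (nperm_union e1 e2 S).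
  change (rsize (_ e1 e2)) with (rsize e1 + rsize e2).+1; rewrite S_INR !plus_INR.
  have := F_ge0 #|S|; have := pos_INR #|S|`!; nra.
- have [->|n_gt0] := posnP (nperm (RCat e1 e2) S).
    by rewrite Rmult_0_r; apply: Rmult_le_pos; apply: pos_INR.
  have [A [AsubS cov1 cov2]] := covers_cat_split cov n_gt0.
  have cardS : (#|A| + #|S :\: A|)%N = #|S| by rewrite -(cardsID A S) (setIidPr AsubS).
  have AleS : (#|A| <= #|S|)%N by rewrite -cardS leq_addr.
  have F_S := binomial_split_le S_split AleS; have fact_S := bin_fact AleS.
  have := IH1 A cov1; have := IH2 _ cov2.
  have := leq_INR (nperm_cat cov1 cov2); have := leq_INR (nperm_le_fact e1 A).
  have := leq_INR (nperm_le_fact e2 (S :\: A)).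
  change (rsize (_ e1 e2)) with (rsize e1 + rsize e2).+1.
  rewrite -cardS addKn in F_S fact_S *; rewrite -{}fact_S S_INR !plus_INR !mult_INR.
  move=> n2_le n1_le n_le IHl IHk.
  apply: cat_bound_arith n_le n1_le n2_le IHk IHl F_S;
    solve [apply: F_ge0 | apply: pos_INR].
- by have := covers_card cov (rm_star_nil e1); rewrite leqNgt ltnW.
Qed.

Lemma rpn_Pstar_ge n : F n <= INR (rpn (@Pstar n)).
Proof.
have [e eP <-] := rpn_spec (Pstar_describable n).
have cov : covers e [set: 'I_n] by move=> w /eP/PstarE w_all a _.
have := nperm_bound cov.
have -> : nperm e [set: 'I_n] = #|[set: 'I_n]|`!.
  rewrite /nperm cardE -(size_permutations (enum_uniq _)) -count_predT.
  apply: eq_in_count => w; rewrite mem_permutations => wP /=.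
  by apply/asboolP/eP/PstarE => a; rewrite (perm_mem wP) mem_enum inE.
have fact_gt0 : 0 < INR #|[set: 'I_n]|`! by apply: lt_0_INR; apply/ltP; apply: fact_gt0.
rewrite cardsT card_ord in fact_gt0 *; exact: Rmult_le_reg_r.
Qed.

End NpermBound.

Lemma central_binomial_ge j : 0 < j -> 16 ^ j <= 'C(j.*2, j) ^ 2 * (4 * j).
Proof.
elim: j => // j IH _; have [->//|j_gt0] := posnP j.
have ratio : j.+1 * 'C(j.+1.*2, j.+1) = 2 * (2 * j + 1) * 'C(j.*2, j).
  have sym : 'C(j.*2.+1, j.+1) = 'C(j.*2.+1, j).
    by rewrite -(bin_sub (_ : j <= j.*2.+1)); [congr 'C(_, _); lia | lia].
  have := mul_bin_diag j.+1.*2 j; have := mul_bin_diag j.*2.+1 j.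
  rewrite doubleS /= sym; lia.
move: ratio (IH j_gt0); set C := 'C(j.*2, j); set D := 'C(j.+1.*2, j.+1) => ratio IHj.
have sq : (j.+1 * D) ^ 2 = 4 * (2 * j + 1) ^ 2 * C ^ 2 by rewrite ratio; lia.
have IHj' : j.+1 ^ 2 * 16 ^ j <= j.+1 * ((2 * j + 1) ^ 2 * C ^ 2).
  apply: leq_trans (leq_mul (leqnn (j.+1 ^ 2)) IHj) _.
  have odd_sq_ge : j.+1 * (4 * j) <= (2 * j + 1) ^ 2 by lia.
  have := leq_mul (leqnn (j.+1 * C ^ 2)) odd_sq_ge; lia.
have : j.+1 ^ 2 * 16 ^ j.+1 <= j.+1 ^ 2 * (D ^ 2 * (4 * j.+1)).
  have -> : j.+1 ^ 2 * (D ^ 2 * (4 * j.+1)) = 4 * j.+1 * (j.+1 * D) ^ 2 by lia.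
  rewrite sq [16 ^ _]expnS; have := leq_mul (leqnn 16) IHj'; lia.
by rewrite leq_pmul2l ?expn_gt0.
Qed.

Lemma pow4_le_binomial m j : 5 * j <= m -> 4 ^ j <= 'C(m, j).
Proof.
elim: j => [|j IH] le5j; first by rewrite bin0.
have := mul_bin_left m j; have := IH (leq_trans (leq_mul (leqnn 5) (leqnSn j)) le5j).
rewrite expnS; nia.
Qed.

Section LowerBound.
Local Open Scope R_scope.

Lemma ln_0 : ln 0 = 0.
Proof. by rewrite /ln; case: Rlt_dec => // h; case: (Rlt_irrefl _ h). Qed.

Lemma ln2_gt0 : 0 < ln 2.
Proof. by have := ln_lt_2; lra. Qed.

Lemma ln_le x y : 0 < x -> x <= y -> ln x <= ln y.
Proof. by move=> x_gt0 [/(ln_increasing _ _ x_gt0)/Rlt_le | ->] //; apply: Rle_refl. Qed.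

Lemma exp_le x y : x <= y -> exp x <= exp y.
Proof. by case=> [/exp_increasing/Rlt_le | ->] //; apply: Rle_refl. Qed.

Lemma ln_le_sub1 x : 0 < x -> ln x <= x - 1.
Proof. by move=> x_gt0; have := exp_ineq1_le (ln x); rewrite exp_ln //; lra. Qed.

Lemma ln_sub_le x y : 0 < x -> 0 < y -> ln x - ln y <= x / y - 1.
Proof.
move=> x_gt0 y_gt0; have := ln_le_sub1 (Rdiv_lt_0_compat _ _ x_gt0 y_gt0).
by rewrite /Rdiv ln_mult ?ln_Rinv //; apply: Rinv_0_lt_compat.
Qed.

Lemma INR_expn (m n : nat) : INR (m ^ n)%N = INR m ^ n.
Proof. by elim: n => [|n IH] //; rewrite expnS mult_INR IH. Qed.

Lemma ln_INR_ge0 m : 0 <= ln (INR m).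
Proof.
case: m => [|m]; first by rewrite ln_0; apply: Rle_refl.
by rewrite -ln_1; apply: ln_le; [lra | apply: (leq_INR (m := 1))].
Qed.

Lemma ln_INR_le k m : (k <= m)%N -> ln (INR k) <= ln (INR m).
Proof.
case: k => [|k] km; first by rewrite ln_0; apply: ln_INR_ge0.
by apply: ln_le; [apply: lt_0_INR; lia | apply: leq_INR].
Qed.

Lemma ln_INR_double m : (0 < m)%N -> ln (INR m.*2) = ln 2 + ln (INR m).
Proof.
move=> m_gt0; have INR2 : INR 2 = 2 by rewrite /=; lra.
by rewrite -mul2n mult_INR INR2 ln_mult //; [lra | apply: lt_0_INR; lia].
Qed.

Lemma ln_binomial_succ n j : (j <= n)%N ->
  ln (INR 'C(n, j)) + INR j / INR n.+1 <= ln (INR 'C(n.+1, j)).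
Proof.
move=> jn; have n1_gt0 : 0 < INR n.+1 by apply: lt_0_INR; lia.
have nj_gt0 : 0 < INR (n.+1 - j) by apply: lt_0_INR; lia.
have C_gt0 k : (j <= k)%N -> 0 < INR 'C(k, j).
  by move=> jk; apply: lt_0_INR; apply/ltP; rewrite bin_gt0.
have Cn := C_gt0 _ jn; have Cn1 := C_gt0 _ (leqW jn).
have E : (n.+1 * 'C(n, j) = (n.+1 - j) * 'C(n.+1, j))%N := mul_bin_down n.+1 j.
have := f_equal ln (congr1 INR E); rewrite !mult_INR !ln_mult //.
have := ln_sub_le nj_gt0 n1_gt0.
have -> : INR (n.+1 - j) / INR n.+1 - 1 = - (INR j / INR n.+1).
  have -> : INR n.+1 = INR (n.+1 - j) + INR j by rewrite -plus_INR; congr INR; lia.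
  by field; have := pos_INR j; lra.
lra.
Qed.

Lemma ln_binomial_ge_central j m : (j.*2 <= m)%N ->
  ln (INR 'C(j.*2, j)) + INR (m - j.*2) * INR j / INR m <= ln (INR 'C(m, j)).
Proof.
elim: m => [|m IH]; first by rewrite leqn0 double_eq0 => /eqP->; rewrite /=; lra.
rewrite leq_eqVlt => /orP[/eqP<-|]; first by rewrite subnn /=; lra.
rewrite ltnS => le2jm; have {}IH := IH le2jm.
have step : ln (INR 'C(m, j)) + INR j / INR m.+1 <= ln (INR 'C(m.+1, j)).
  by apply: ln_binomial_succ; rewrite -addnn in le2jm; lia.
have shrink : INR (m - j.*2) * INR j / INR m.+1 <= INR (m - j.*2) * INR j / INR m.
  have [m0|m_gt0] := posnP m; first by rewrite m0 sub0n /=; lra.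
  apply: Rmult_le_compat_l; first by apply: Rmult_le_pos; apply: pos_INR.
  by apply: Rinv_le_contravar; [apply: lt_0_INR; lia | rewrite S_INR; lra].
have -> : INR (m.+1 - j.*2) = INR (m - j.*2) + 1 by rewrite subSn // S_INR.
lra.
Qed.

Lemma ln_central_binomial_ge j : (0 < j)%N ->
  4 * ln 2 * INR j <= 2 * ln (INR 'C(j.*2, j)) + 2 * ln 2 + ln (INR j).
Proof.
move=> j_gt0; have C_gt0 : 0 < INR 'C(j.*2, j).
  by apply: lt_0_INR; apply/ltP; rewrite bin_gt0 -addnn leq_addr.
have j_pos : 0 < INR j by apply: lt_0_INR; lia.
have := leq_INR (central_binomial_ge j_gt0); rewrite !mult_INR !INR_expn.
have -> : INR 16 = 2 ^ 4 by rewrite /=; lra.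
have -> : INR 4 = 2 ^ 2 by rewrite /=; lra.
have pow2_gt0 k : 0 < 2 ^ k by apply: pow_lt; lra.
move/(ln_le (pow_lt _ j (pow2_gt0 4%N))).
rewrite !ln_mult ?ln_pow ?ln_1; try lra; last exact: Rmult_lt_0_compat.
by rewrite /=; lra.
Qed.

Lemma ln_binomial_ge_small m j : (5 * j <= m)%N -> 2 * ln 2 * INR j <= ln (INR 'C(m, j)).
Proof.
move=> le5jm; have := leq_INR (pow4_le_binomial le5jm); rewrite INR_expn.
have -> : INR 4 = 2 ^ 2 by rewrite /=; lra.
move/(ln_le (pow_lt _ j (pow_lt _ 2 Rlt_0_2))).
by rewrite !ln_pow; [rewrite /=; lra | lra | apply: pow_lt; lra].
Qed.

Lemma ln_linear_bound m : (128 <= m)%N -> 5 * (ln 2 + ln (INR m)) <= 2 * ln 2 * INR m.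
Proof.
have ln2 := ln_lt_2; elim: m => // m IH; rewrite leq_eqVlt => /orP[/eqP<-|].
  have -> : INR 128 = 2 ^ 7 by rewrite /=; lra.
  by rewrite ln_pow; [rewrite [INR 7]/=; lra | lra].
rewrite ltnS => m_ge; have {}IH := IH m_ge; have m_gt0 : 0 < INR m by apply: lt_0_INR; lia.
have := ln_sub_le (lt_0_INR _ (Nat.lt_0_succ m)) m_gt0.
have : / INR m <= / 128.
  by apply: Rinv_le_contravar; [lra | have := leq_INR m_ge; rewrite [INR _]/=; lra].
rewrite S_INR (_ : (INR m + 1) / INR m - 1 = / INR m); last by field; lra.
lra.
Qed.

Definition phi (x : R) : R := (3 * ln 2 * x + x ^ 2) / (4 * ln 2).

Definition lb_exponent (m : nat) : R := 2 * ln 2 * INR m - phi (ln (INR m)).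

Lemma phi_le x y : 0 <= x <= y -> phi x <= phi y.
Proof.
move=> xy; have := ln2_gt0; rewrite /phi /Rdiv => ln2.
apply: Rmult_le_compat_r; first by left; apply: Rinv_0_lt_compat; lra.
nra.
Qed.

Lemma phi_sub x a : phi x - phi (x - a) = a * (3 * ln 2 + 2 * x - a) / (4 * ln 2).
Proof. by rewrite /phi; field; have := ln2_gt0; lra. Qed.

Lemma pow4_exp m : 4 ^ m = exp (2 * ln 2 * INR m).
Proof.
have ln4 : ln 4 = 2 * ln 2 by replace 4 with (2 * 2) by ring; rewrite ln_mult; lra.
by rewrite -[4 ^ m]exp_ln ?ln_pow ?ln4; [congr exp; ring | lra | apply: pow_lt; lra].
Qed.

Lemma exp_lb_exponent_le m : exp (lb_exponent m) <= 4 ^ m.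
Proof.
rewrite pow4_exp; apply: exp_le; rewrite /lb_exponent.
have := phi_le (conj (Rle_refl 0) (ln_INR_ge0 m)); rewrite {1}/phi; lra.
Qed.

Lemma four_pow_Rpower m :
  4 ^ m * Rpower (INR m) (- (3 + log2 (INR m)) / 4) = exp (lb_exponent m).
Proof.
rewrite pow4_exp /Rpower -exp_plus /lb_exponent /phi /log2; congr exp.
by field; have := ln2_gt0; lra.
Qed.

Lemma lb_exponent_split_small m j : (5 * j <= m)%N ->
  lb_exponent m <= ln (INR 'C(m, j)) + lb_exponent (m - j).
Proof.
move=> le5jm; have lnC := ln_binomial_ge_small le5jm.
have phi_mj := phi_le (conj (ln_INR_ge0 (m - j)) (ln_INR_le (leq_subr j m))).
have mE : INR m = INR (m - j) + INR j by rewrite -plus_INR; congr INR; lia.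
rewrite /lb_exponent {1}mE; lra.
Qed.

(* c >= 2LJ - (L + M)/2 + (L - a)J >= 2LJ - a(L + M)/(2L), and the
   correction a(3L + 2M - a)/(4L) exceeds a(L + M)/(2L) by a(L - a)/(4L). *)
Lemma split_large_arith L M a J c c2 u lj : 0 < L -> 0 <= M -> 0 <= a <= L ->
  L - a <= u -> lj <= M - L -> 4 * L * J <= 2 * c2 + 2 * L + lj -> c2 + u * J <= c ->
  L + M <= 2 * L * J -> 2 * L * J - a * (3 * L + 2 * M - a) / (4 * L) <= c.
Proof.
move=> L_gt0 M_ge0 a_bd a_u lj_le c2_ge c_ge LM_le.
have LJ_gt0 : 0 < L * J by lra.
have J_ge0 : 0 <= J by nra.
have uJ : (L - a) * J <= u * J by apply: Rmult_le_compat_r.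
have c_lb : 2 * L * J - (L + M) / 2 + (L - a) * J <= c by lra.
have h1 : (L - a) * (L + M) <= (L - a) * (2 * L * J) by apply: Rmult_le_compat_l; lra.
have h2 : 4 * L * (2 * L * J - (L + M) / 2 + (L - a) * J) <= 4 * L * c.
  by apply: Rmult_le_compat_l; lra.
have h3 : 0 <= a * (L - a) by nra.
apply: (Rmult_le_reg_l (4 * L)); first lra.
have -> : 4 * L * (2 * L * J - a * (3 * L + 2 * M - a) / (4 * L)) =
          8 * L * L * J - a * (3 * L + 2 * M - a) by field; lra.
nra.
Qed.

Lemma lb_exponent_split_large m j : (0 < j)%N -> (j.*2 <= m)%N ->
  ln 2 + ln (INR m) <= 2 * ln 2 * INR j ->
  lb_exponent m <= ln (INR 'C(m, j)) + lb_exponent (m - j).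
Proof.
move=> j_gt0 le2jm large; set k := (m - j)%N.
have [jk km2] : (j <= k)%N /\ (m <= k.*2)%N by rewrite /k -!addnn in le2jm *; lia.
have mE : INR m = INR k + INR j by rewrite -plus_INR; congr INR; rewrite /k; lia.
have m2jE : INR (m - j.*2) = INR k - INR j.
  suff : INR k = INR (m - j.*2) + INR j by lra.
  by rewrite -plus_INR; congr INR; rewrite /k -addnn; lia.
have [j_pos k_pos] : 0 < INR j /\ 0 < INR k by split; apply: lt_0_INR; lia.
have lnk_le : ln (INR k) <= ln (INR m) := ln_INR_le (leq_subr j m).
have lnm_le : ln (INR m) <= ln 2 + ln (INR k).
  by rewrite -ln_INR_double; [apply: ln_INR_le | lia].
have lnj_le : ln 2 + ln (INR j) <= ln (INR m) by rewrite -ln_INR_double //; apply: ln_INR_le.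
have u_bd : ln 2 - (ln (INR m) - ln (INR k)) <= (INR k - INR j) / INR m.
  have m_pos : 0 < INR m by lra.
  have := ln_sub_le (_ : 0 < INR k.*2) m_pos; rewrite ln_INR_double -?mul2n ?mult_INR; try lia.
  rewrite [INR 2]/= (_ : (1 + 1) * INR k / INR m - 1 = (INR k - INR j) / INR m); first lra.
  by rewrite mE; field; lra.
have lnC2 := ln_central_binomial_ge j_gt0.
have := ln_binomial_ge_central le2jm; rewrite m2jE => lnC.
have phiE := phi_sub (ln (INR m)) (ln (INR m) - ln (INR k)).
rewrite (_ : ln (INR m) - (ln (INR m) - ln (INR k)) = ln (INR k)) in phiE; last by ring.
have a_bd : 0 <= ln (INR m) - ln (INR k) <= ln 2 by lra.
have lnj_bd : ln (INR j) <= ln (INR m) - ln 2 by lra.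
have lnC_bd : ln (INR 'C(j.*2, j)) + (INR k - INR j) / INR m * INR j <= ln (INR 'C(m, j)) by lra.
have := split_large_arith ln2_gt0 (ln_INR_ge0 m) a_bd u_bd lnj_bd lnC2 lnC_bd large => arith.
rewrite /lb_exponent {1}mE; lra.
Qed.

Lemma lb_exponent_split m j : (128 <= m)%N -> (0 < j)%N -> (j.*2 <= m)%N ->
  lb_exponent m <= ln (INR 'C(m, j)) + lb_exponent (m - j).
Proof.
move=> m_ge j_gt0 le2jm.
have [small|large] := Rlt_le_dec (2 * ln 2 * INR j) (ln 2 + ln (INR m)).
  apply: lb_exponent_split_small; apply/leP/INR_le.
  have := ln_linear_bound m_ge; have := ln2_gt0; rewrite mult_INR [INR 5]/=; nra.
exact: lb_exponent_split_large.
Qed.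

(* The factor 4^-128 keeps the bound below 1 up to m = 128, from where
   ln_linear_bound makes the recursion available. *)
Definition lower_bound (m : nat) : R := / 4 ^ 128 * exp (lb_exponent m).

Lemma inv_pow4_gt0 k : 0 < / 4 ^ k.
Proof. by apply/Rinv_0_lt_compat/pow_lt; lra. Qed.

Lemma lower_bound_ge0 m : 0 <= lower_bound m.
Proof. by apply: Rmult_le_pos; left; [apply: inv_pow4_gt0 | apply: exp_pos]. Qed.

Lemma lower_bound_le1 m : (m <= 128)%N -> lower_bound m <= 1.
Proof.
move=> m_le; rewrite /lower_bound -(Rinv_l (4 ^ 128)); last by apply: pow_nonzero; lra.
apply: Rmult_le_compat_l; first exact/Rlt_le/inv_pow4_gt0.
apply: Rle_trans (exp_lb_exponent_le m) _.
by apply: Rle_pow; [lra | apply/leP].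
Qed.

Lemma lower_bound_split m j : (128 <= m)%N -> (0 < j)%N -> (j.*2 <= m)%N ->
  lower_bound m <= INR 'C(m, j) * lower_bound (m - j).
Proof.
move=> m_ge j_gt0 le2jm; have C_gt0 : 0 < INR 'C(m, j).
  by apply: lt_0_INR; apply/ltP; rewrite bin_gt0 -addnn in le2jm *; lia.
have exp_split : exp (lb_exponent m) <= INR 'C(m, j) * exp (lb_exponent (m - j)).
  by rewrite -[INR _]exp_ln // -exp_plus; apply/exp_le/lb_exponent_split.
have := inv_pow4_gt0 128; rewrite /lower_bound; nra.
Qed.

Lemma lower_bound_splitting : binomial_splitting lower_bound.
Proof.
move=> m; have [m_lt|m_ge] := ltnP m 128; first by left; apply/lower_bound_le1/ltnW.
right; split=> [|k /andP[k_gt0 k_lt_m]]; first by lia.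
have F_ge0 := lower_bound_ge0.
have [le2km|lt_m2k] := leqP k.*2 m.
  apply: Rle_trans (lower_bound_split m_ge k_gt0 le2km) _.
  by apply: Rmult_le_compat_l; [apply: pos_INR | have := F_ge0 k; lra].
have mk_gt0 : (0 < m - k)%N by lia.
have le2mk : ((m - k).*2 <= m)%N by rewrite -addnn in lt_m2k *; lia.
have := lower_bound_split m_ge mk_gt0 le2mk.
rewrite subKn ?bin_sub ?(ltnW k_lt_m) // => split_mk; apply: Rle_trans split_mk _.
by apply: Rmult_le_compat_l; [apply: pos_INR | have := F_ge0 (m - k)%N; lra].
Qed.

End LowerBound.

Theorem corollary8p6 :
  exists (c : R) (N : nat), (0 < c)%R /\
    forall n : nat, (N <= n)%N ->
      (c * (4 ^ n) * Rpower (INR n) (- (3 + log2 (INR n)) / 4) <= INR (rpn (@Pstar n)))%R.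
Proof.
exists (/ 4 ^ 128)%R, 0%N; split; first exact: inv_pow4_gt0.
move=> n _; rewrite Rmult_assoc four_pow_Rpower.
exact: (@rpn_Pstar_ge lower_bound lower_bound_ge0 lower_bound_splitting n).
Qed.
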